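(* Let $n$ be even, and let $S_1$ and $S_2$ be two disjoint sets of cells of an $n\times n$ array, each of which forms a $2$-factor that is the union of two cycles of length $n$. Then for any positive integers $s,t,u,v$ with $s>t+n$, $t>u+n$ and $u>v+n$, the cells of $S_1\cup S_2$ can be filled with nonzero integers so that the resulting array is shiftable, has support $\{s+i,\ t+i,\ u+i,\ v+i\mid 1\le i\le n\}$ (each of these $4n$ absolute values occurring exactly once), and the four entries in each row and in each column sum to $0$.
   Context: Cells of an $n\times n$ array are identified with edges of $K_{n,n}$ (cell $(i,j)$ ↔ edge $\{a_i,b_j\}$). A set of cells forms a $2$-factor if the corresponding edges form a spanning $2$-regular subgraph of $K_{n,n}$; a cycle of length $n$ here means a cycle in $K_{n,n}$ with $n$ edges. The support of an array is the set of absolute values of its entries. An array is shiftable if each row and each column contains the same number of positive and negative entries. *)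

From HB Require Import structures.
From mathcomp Require Import all_boot all_order all_algebra.
Set Implicit Arguments. Unset Strict Implicit. Unset Printing Implicit Defensive.
Import Order.TTheory GRing.Theory Num.Theory.

(* Cells of an n x n array: pairs (row, column) in 'I_n * 'I_n, identified with
   edges {a_row, b_col} of K_{n,n}. *)
Definition cell n := ('I_n * 'I_n)%type.

Definition two_factor n (S : {set cell n}) : Prop :=
  (forall i : 'I_n, #|[set c in S | c.1 == i]| = 2) /\
  (forall j : 'I_n, #|[set c in S | c.2 == j]| = 2).

(* C is (the edge set of) a cycle of length len in K_{n,n}: there are m >= 2
   distinct rows r_0..r_{m-1} and distinct columns c_0..c_{m-1}, len = 2m, and
   C consists of the edges a_{r_i} b_{c_i} and b_{c_i} a_{r_{i+1 mod m}}. *)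
Definition is_cycle n (C : {set cell n}) (len : nat) : Prop :=
  exists m (r c : 'I_m -> 'I_n),
    [/\ 2 <= m, len = 2 * m, injective r, injective c &
        C = [set (r i, c i) | i : 'I_m] :|: [set (r (ordS i), c i) | i : 'I_m]].

Definition two_factor_two_ncycles n (S : {set cell n}) : Prop :=
  two_factor S /\
  exists C1 C2 : {set cell n},
    [/\ is_cycle C1 n, is_cycle C2 n, [disjoint C1 & C2] & S = C1 :|: C2].

(* Arrays: n x n integer matrices; a cell is empty iff its entry is 0
   (filled cells carry nonzero integers). *)
Definition shiftable n (A : 'M[int]_n) : Prop :=
  (forall i : 'I_n, #|[set j | 0 < A i j]%R| = #|[set j | A i j < 0]%R|) /\
  (forall j : 'I_n, #|[set i | 0 < A i j]%R| = #|[set i | A i j < 0]%R|).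

Definition abs_entries n (A : 'M[int]_n) (S : {set cell n}) : seq nat :=
  [seq absz (A c.1 c.2) | c <- enum S].

Definition block (x n : nat) : seq nat := [seq x + i | i <- iota 1 n].

From HB Require Import structures.
From mathcomp Require Import all_boot all_order all_algebra zify.
Import Order.TTheory GRing.Theory Num.Theory.
Set Implicit Arguments. Unset Strict Implicit. Unset Printing Implicit Defensive.

(* Write n = 2m and take a cycle with rows r_0, ..., r_(m-1) and columns
   c_0, ..., c_(m-1), i.e. with cells (r_x, c_x) and (r_(x+1), c_x).  Walking
   around it from (r_k, c_k), label the cells 1, ..., 2m and put +-(o + label)
   in them with alternating signs.  Consecutive cells alternately share a
   column and a row, so every line of the cycle gets one positive and one
   negative entry; a column sums to -1 and a row to +1, except the starting
   row r_k, which carries the labels 1 and 2m and sums to 1 - 2m.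

   Fill the two cycles of S1 this way and the two cycles of S2 with all signs
   reversed, using the offsets s, t, u, v.  Every line lies in exactly one
   cycle of each 2-factor, so all the +-1 cancel; the two exceptional rows
   cancel as well once each cycle of S2 is started at a row where a cycle of
   S1 is started.  Such a pairing of starting rows exists because the rows of
   the two cycles of a 2-factor cover all rows. *)

Lemma big_pair R (idx : R) (op : Monoid.com_law idx) (A B : finType) (F : A * B -> R) :
  \big[op/idx]_p F p = \big[op/idx]_a \big[op/idx]_b F (a, b).
Proof. by rewrite pair_bigA; apply: eq_bigr => -[]. Qed.

Lemma card_setIdU_disjoint (T : finType) (A B : {set T}) (P : pred T) :
  [disjoint A & B] -> #|[set x in A :|: B | P x]| = #|[set x in A | P x]| + #|[set x in B | P x]|.
Proof.
move=> dAB; have -> : [set x in A :|: B | P x] = [set x in A | P x] :|: [set x in B | P x].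
  by apply/setP => x; rewrite !inE andb_orl.
have dP : [disjoint [set x in A | P x] & [set x in B | P x]].
  by apply: (disjointW _ _ dAB); apply/subsetP => x; rewrite inE => /andP[].
by apply/eqP; rewrite (eq_leqif (leq_card_setU _ _)).
Qed.

Lemma bigcup_bool2 (T : finType) (F : bool -> bool -> {set T}) :
  \bigcup_(k : bool * bool) F k.1 k.2 =
  (F false false :|: F false true) :|: (F true false :|: F true true).
Proof.
apply/setP => z; apply/bigcupP/idP => [[[[] []] _ Fz]|]; rewrite !inE ?Fz ?orbT //.
by case/orP => /orP[] Fz;
  [exists (false, false) | exists (false, true) | exists (true, false) | exists (true, true)].
Qed.

Lemma cover_pairing (T : finType) (A B : bool -> pred T) :
  (forall b, exists t, A b t) -> (forall b, exists t, B b t) ->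
  (forall t, A false t || A true t) -> (forall t, B false t || B true t) ->
  exists sw, forall b, exists t, A b t && B (b (+) sw) t.
Proof.
move=> A_ne B_ne A_cov B_cov.
case E: ([exists t, A false t && B false t] && [exists t, A true t && B true t]).
  by case/andP: E => /existsP E0 /existsP E1; exists false => -[].
exists true; move/negbT: E; rewrite negb_and => /orP[] /existsPn nE [] /=.
- have [t Bt] := B_ne false; exists t; move: (A_cov t) (nE t); rewrite Bt !andbT.
  by case: (A false t).
- have [t At] := A_ne false; exists t; move: (B_cov t) (nE t); rewrite At.
  by case: (B false t).
- have [t At] := A_ne true; exists t; move: (B_cov t) (nE t); rewrite At /=.
  by case: (B true t); rewrite ?orbF.
- have [t Bt] := B_ne true; exists t; move: (A_cov t) (nE t); rewrite Bt !andbT.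
  by case: (A true t); rewrite ?orbF.
Qed.

Lemma mem_block x o len : (x \in block o len) = (o < x <= o + len).
Proof.
apply/mapP/idP => [[i]|x_in]; first by rewrite mem_iota => ? ->; lia.
by exists (x - o); rewrite ?mem_iota; lia.
Qed.

Lemma sum_sign_fst (F : bool * bool -> int) :
  (\sum_(k : bool * bool) (-1) ^+ k.1 * F k = \sum_b F (false, b) - \sum_b F (true, b))%R.
Proof.
rewrite big_pair big_bool /= addrC -sumrN.
by congr (_ + _)%R; apply: eq_bigr => b _; rewrite ?expr0 ?expr1 ?mul1r ?mulN1r.
Qed.

Local Open Scope ring_scope.

Section CellMatrix.

Variables (n : nat) (Y : finType) (E : Y -> cell n) (w : Y -> int).

Definition cell_mx : 'M[int]_n := \matrix_(i, j) \sum_(y | E y == (i, j)) w y.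

Lemma cell_mx_row_sum i : \sum_j cell_mx i j = \sum_(y | (E y).1 == i) w y.
Proof.
under eq_bigr do rewrite mxE big_mkcond.
rewrite exchange_big [RHS]big_mkcond; apply: eq_bigr => y _ /=.
case: (E y) => a b /=; case: eqP => [->|ne]; last first.
  by rewrite big1 // => j _; rewrite xpair_eqE; case: eqP.
rewrite (bigD1 b) //= eqxx big1 ?addr0 // => j /negbTE nj.
by rewrite xpair_eqE eqxx /= eq_sym nj.
Qed.

Hypothesis E_inj : injective E.

Lemma cell_mxE y : cell_mx (E y).1 (E y).2 = w y.
Proof.
rewrite mxE (big_pred1 y) // => z /=.
by rewrite -surjective_pairing; apply/eqP/eqP => [/E_inj|->].
Qed.

Lemma cell_mx_out i j : (i, j) \notin [set E y | y : Y] -> cell_mx i j = 0.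
Proof.
move=> nij; rewrite mxE big_pred0 // => y; apply: contraNF nij => /eqP <-.
exact: imset_f.
Qed.

Lemma card_cell_mx_row (P : pred int) i : ~~ P 0 ->
  #|[set j | P (cell_mx i j)]| = #|[set y | ((E y).1 == i) && P (w y)]|.
Proof.
move=> nP0; rewrite -(@card_in_imset _ _ (fun y => (E y).2)); last first.
  move=> y z; rewrite !inE => /andP[/eqP Ey _] /andP[/eqP Ez _] Eyz.
  by apply: E_inj; rewrite [E y]surjective_pairing [E z]surjective_pairing Ey Ez Eyz.
apply: eq_card => j; rewrite inE; apply/idP/imsetP => [Pij|[y]]; last first.
  by rewrite inE => /andP[/eqP <- Py] ->; rewrite cell_mxE.
have [/imsetP[y _ Ey]|nij] := boolP ((i, j) \in [set E y | y : Y]); last first.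
  by move: Pij; rewrite cell_mx_out // (negbTE nP0).
by exists y; rewrite ?inE -Ey //= eqxx; have := cell_mxE y; rewrite -Ey => <-.
Qed.

Lemma abs_entries_cell_mx :
  perm_eq (abs_entries cell_mx [set E y | y : Y]) [seq absz (w y) | y <- enum Y].
Proof.
have -> : [seq absz (w y) | y <- enum Y] =
          [seq absz (cell_mx c.1 c.2) | c <- map E (enum Y)].
  by rewrite -[RHS]map_comp; apply: eq_map => y /=; rewrite cell_mxE.
apply: perm_map; apply: uniq_perm; first exact: enum_uniq.
  by rewrite map_inj_uniq ?enum_uniq.
by move=> c; rewrite mem_enum; apply/imsetP/mapP => -[y _ ->]; exists y; rewrite ?mem_enum.
Qed.

Hypothesis w_neq0 : forall y, w y != 0.

Lemma cell_mx_neq0 i j : (cell_mx i j != 0) = ((i, j) \in [set E y | y : Y]).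
Proof.
apply/idP/idP => [|/imsetP[y _ Ey]]; first by apply: contraR => /cell_mx_out ->.
by have := cell_mxE y; rewrite -Ey => ->; apply: w_neq0.
Qed.

End CellMatrix.

Lemma tr_cell_mx n (Y : finType) (E : Y -> cell n) (w : Y -> int) :
  (cell_mx E w)^T = cell_mx (fun y => ((E y).2, (E y).1)) w.
Proof.
apply/matrixP => i j; rewrite !mxE; apply: eq_bigl => y.
by case: (E y) => a b; rewrite !xpair_eqE andbC.
Qed.

Lemma cell_mx_col_sum n (Y : finType) (E : Y -> cell n) (w : Y -> int) j :
  \sum_i cell_mx E w i j = \sum_(y | (E y).2 == j) w y.
Proof.
rewrite -(cell_mx_row_sum (fun y => ((E y).2, (E y).1))) -tr_cell_mx.
by apply: eq_bigr => i _; rewrite [RHS]mxE.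
Qed.

Lemma card_cell_mx_col n (Y : finType) (E : Y -> cell n) (w : Y -> int)
    (P : pred int) j :
  injective E -> ~~ P 0 ->
  #|[set i | P (cell_mx E w i j)]| = #|[set y | ((E y).2 == j) && P (w y)]|.
Proof.
move=> E_inj nP0.
have swap_inj : injective (fun y => ((E y).2, (E y).1)).
  by move=> y z [e2 e1]; apply: E_inj; rewrite [E y]surjective_pairing e1 e2 -surjective_pairing.
rewrite -(card_cell_mx_row w swap_inj j nP0).
by apply: eq_card => i; rewrite !inE -tr_cell_mx [in RHS]mxE.
Qed.

Local Close Scope ring_scope.

Section OrdSteps.

Variable m : nat.

Definition ord_steps (k x : 'I_m) : nat := (x + m - k) %% m.

Lemma ord_stepsE k x : ord_steps k x = if k <= x then x - k else x + m - k.
Proof.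
have hx := ltn_ord x; have hk := ltn_ord k; rewrite /ord_steps.
case: ifP => kx; first by rewrite -addnBAC // modnDr modn_small; lia.
by rewrite modn_small; lia.
Qed.

Lemma ord_steps_lt k x : ord_steps k x < m.
Proof. have := ltn_ord x; have := ltn_ord k; rewrite ord_stepsE; case: ifP => ?; lia. Qed.

Lemma ord_steps_inj k : injective (ord_steps k).
Proof.
move=> x y; have := ltn_ord x; have := ltn_ord y; have := ltn_ord k.
rewrite !ord_stepsE => hk hy hx e; apply: val_inj => /=; move: e.
by case: ifP => ?; case: ifP => ?; lia.
Qed.

Lemma ord_steps_pred k x :
  ord_steps k (ord_pred x) = (if x == k then m else ord_steps k x).-1.
Proof.
have hx := ltn_ord x; have hk := ltn_ord k.
have px : (ord_pred x : nat) = (if x == 0 :> nat then m else x).-1.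
  rewrite /=; case: eqP => [->|x0]; first by rewrite modn_small; lia.
  by rewrite -subn1 -addnBAC ?modnDr ?modn_small; lia.
rewrite !ord_stepsE px -val_eqE /=.
by case: eqP => ?; case: eqP => ?; do ![case: ifP => ?]; lia.
Qed.

Lemma ord_steps_eq0 k x : (ord_steps k x == 0) = (x == k).
Proof.
have := ltn_ord x; have := ltn_ord k; rewrite ord_stepsE -val_eqE /=.
by case: ifP => ? ? ?; apply/eqP/eqP; lia.
Qed.

End OrdSteps.

Lemma ordS_neq m (x : 'I_m) : 1 < m -> ordS x != x.
Proof.
move=> m_gt1; rewrite -val_eqE /=; have := ltn_ord x; case: (ltnP x.+1 m) => [?|?] ?.
  by rewrite modn_small //; apply/eqP; lia.
have -> : x.+1 = m by lia.
by rewrite modnn; apply/eqP; lia.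
Qed.

Section Cycle.

Variables (m n : nat) (r c : 'I_m -> 'I_n).

Definition cyc : {set cell n} :=
  [set (r i, c i) | i : 'I_m] :|: [set (r (ordS i), c i) | i : 'I_m].

Definition cyc_cell (y : bool * 'I_m) : cell n :=
  (r (if y.1 then ordS y.2 else y.2), c y.2).

Lemma cyc_cellE : [set cyc_cell y | y : bool * 'I_m] = cyc.
Proof.
apply/setP => z; apply/imsetP/setUP => [[[[] x] _ ->]|[]/imsetP[x _ ->]].
- by right; apply: imset_f.
- by left; apply: imset_f.
- by exists (false, x).
- by exists (true, x).
Qed.

Lemma mem_cyc_cell y : cyc_cell y \in cyc.
Proof. by rewrite -cyc_cellE imset_f. Qed.

Lemma cyc_cell_inj : 1 < m -> injective r -> injective c -> injective cyc_cell.
Proof.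
move=> m_gt1 r_inj c_inj [b x] [b' x'] [/r_inj e /c_inj xx']; subst x'.
by case: b b' e => [] [] // /eqP; rewrite ?(eq_sym x) (negbTE (ordS_neq x m_gt1)).
Qed.

Lemma card_cyc_cell_row (B : {set bool}) i :
  #|[set y | ((cyc_cell y).1 == i) && (y.1 \in B)]| = #|B| * #|[set x | r x == i]|.
Proof.
pose shift (y : bool * 'I_m) := (y.1, if y.1 then ordS y.2 else y.2).
have shift_inj : injective shift.
  by move=> [b x] [_ x'] [<-]; case: b => [/(@ordS_inj m)|] ->.
rewrite -cardsX -[RHS](card_preimset _ shift_inj); apply: eq_card => -[b x].
by rewrite !inE andbC.
Qed.

Lemma card_cyc_cell_col (B : {set bool}) j :
  #|[set y | ((cyc_cell y).2 == j) && (y.1 \in B)]| = #|B| * #|[set x | c x == j]|.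
Proof. by rewrite -cardsX; apply: eq_card => -[b x]; rewrite !inE andbC. Qed.

Lemma card_setId_cyc (P : pred (cell n)) :
  1 < m -> injective r -> injective c ->
  #|[set z in cyc | P z]| = #|[set y | P (cyc_cell y)]|.
Proof.
move=> m_gt1 r_inj c_inj; rewrite -(card_imset _ (cyc_cell_inj m_gt1 r_inj c_inj)).
apply: eq_card => z; rewrite -cyc_cellE !inE.
apply/andP/imsetP => [[/imsetP[y _ ->] Py]|[y]]; first by exists y; rewrite ?inE.
by rewrite inE => Py ->; rewrite imset_f.
Qed.

End Cycle.

Section CycleWeight.

Variables (m : nat) (k : 'I_m) (o : nat).

(* The cell [(b, x)], i.e. (r_(x+b), c_x), is number [cyc_label (b, x)] (from 0) on the
   walk around the cycle that starts at (r_k, c_k). *)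
Definition cyc_label (y : bool * 'I_m) : nat := 2 * ord_steps k y.2 + y.1.

Definition cyc_weight (y : bool * 'I_m) : int := (-1) ^+ y.1 * ((o + cyc_label y).+1)%:R.

Lemma cyc_label_lt y : cyc_label y < 2 * m.
Proof. by have := ord_steps_lt k y.2; rewrite /cyc_label; case: y.1; lia. Qed.

Lemma cyc_label_inj : injective cyc_label.
Proof.
move=> [b x] [b' x']; rewrite /cyc_label /= => e.
have bb' : b = b' by case: b b' e => [] []; lia.
by subst b'; congr (_, _); apply: (@ord_steps_inj _ k); lia.
Qed.

Lemma abs_cyc_weight y : absz (cyc_weight y) = (o + cyc_label y).+1.
Proof. by rewrite /cyc_weight; case: y.1; rewrite ?expr0 ?expr1 ?mulN1r ?mul1r ?abszN natz. Qed.

Lemma cyc_weight_gt0 y : (0 < cyc_weight y)%R = ~~ y.1.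
Proof.
by rewrite /cyc_weight; case: y.1; rewrite ?expr0 ?expr1 ?mulN1r ?mul1r ?oppr_gt0 ?ltrn0 ?ltr0Sn.
Qed.

Lemma cyc_weight_lt0 y : (cyc_weight y < 0)%R = y.1.
Proof.
by rewrite /cyc_weight; case: y.1; rewrite ?expr0 ?expr1 ?mulN1r ?mul1r ?oppr_lt0 ?ltrn0 ?ltr0Sn.
Qed.

Lemma cyc_weight_col_pair x : (cyc_weight (false, x) + cyc_weight (true, x) = -1)%R.
Proof. rewrite /cyc_weight /cyc_label /= expr0 expr1 mul1r mulN1r; lia. Qed.

Lemma cyc_weight_row_pair x :
  (cyc_weight (false, x) + cyc_weight (true, ord_pred x) = 1 - (2 * m * (x == k))%:R)%R.
Proof.
rewrite /cyc_weight /cyc_label /= ord_steps_pred expr0 expr1 mul1r mulN1r.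
have := ltn_ord k; case: eqP => [->|/eqP xk] m_gt0.
  by move: (ord_steps_eq0 k k); rewrite eqxx => /eqP ->; lia.
by move: xk; rewrite -ord_steps_eq0; lia.
Qed.

End CycleWeight.

Local Open Scope ring_scope.

Section CycleSums.

Variables (m n : nat) (r c : 'I_m -> 'I_n) (k : 'I_m) (o : nat).

Lemma cyc_row_sum i :
  \sum_(y | (cyc_cell r c y).1 == i) cyc_weight k o y =
  #|[set x | r x == i]|%:R - (2 * m * (r k == i))%:R.
Proof.
rewrite big_mkcond big_pair big_bool /= (reindex_inj (@ord_pred_inj m)) /=.
under eq_bigr do rewrite ord_predK.
rewrite addrC -big_split /=.
transitivity (\sum_(x | r x == i) (1 - (2 * m * (x == k))%:R : int)).
  by rewrite [RHS]big_mkcond; apply: eq_bigr => x _; case: ifP; rewrite ?addr0 ?cyc_weight_row_pair.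
rewrite sumrB -sum1dep_card natr_sum; congr (_ - _).
have [rk|rk] := eqVneq (r k) i.
  by rewrite (bigD1 k) ?rk //= eqxx big1 ?addr0 // => x /andP[_ /negbTE ->]; rewrite muln0.
rewrite big1 ?muln0 // => x /eqP rx; suff /negbTE -> : x != k by rewrite muln0.
by apply: contraNneq rk => <-; rewrite rx.
Qed.

Lemma cyc_col_sum j :
  \sum_(y | (cyc_cell r c y).2 == j) cyc_weight k o y = - #|[set x | c x == j]|%:R.
Proof.
rewrite big_mkcond big_pair big_bool /= addrC -big_split /=.
transitivity (\sum_(x | c x == j) (-1 : int)).
  by rewrite [RHS]big_mkcond; apply: eq_bigr => x _; case: ifP; rewrite ?addr0 ?cyc_weight_col_pair.
by rewrite sumrN -sum1dep_card natr_sum.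
Qed.

End CycleSums.

Section CycleFamily.

Variables (m n : nat) (K : finType) (r c : K -> 'I_m -> 'I_n).
Variables (sgn : K -> bool) (base : K -> 'I_m) (ofs : K -> nat).

Definition fam_cell (y : K * (bool * 'I_m)) : cell n := cyc_cell (r y.1) (c y.1) y.2.

Definition fam_weight (y : K * (bool * 'I_m)) : int :=
  (-1) ^+ sgn y.1 * cyc_weight (base y.1) (ofs y.1) y.2.

Lemma fam_row_sum i :
  \sum_(y | (fam_cell y).1 == i) fam_weight y =
  \sum_k (-1) ^+ sgn k * (#|[set x | r k x == i]|%:R - (2 * m * (r k (base k) == i))%:R).
Proof.
rewrite big_mkcond big_pair; apply: eq_bigr => k _.
rewrite -(cyc_row_sum _ (c k) _ (ofs k)) mulr_sumr [RHS]big_mkcond.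
apply: eq_bigr => y _ /=.
by rewrite /fam_cell; case: ifP; rewrite ?mulr0.
Qed.

Lemma fam_col_sum j :
  \sum_(y | (fam_cell y).2 == j) fam_weight y =
  - \sum_k (-1) ^+ sgn k * #|[set x | c k x == j]|%:R.
Proof.
rewrite big_mkcond big_pair -sumrN; apply: eq_bigr => k _.
rewrite -mulrN -(cyc_col_sum (r k) _ (base k) (ofs k)) mulr_sumr [RHS]big_mkcond.
apply: eq_bigr => y _ /=.
by rewrite /fam_cell; case: ifP; rewrite ?mulr0.
Qed.

Lemma fam_weight_gt0 y : (0 < fam_weight y) = (y.2.1 == sgn y.1).
Proof.
rewrite /fam_weight; case: (sgn y.1); rewrite ?expr0 ?expr1 ?mul1r ?mulN1r.
  by rewrite oppr_gt0 cyc_weight_lt0 eqb_id.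
by rewrite cyc_weight_gt0 eqbF_neg.
Qed.

Lemma fam_weight_lt0 y : (fam_weight y < 0) = (y.2.1 == ~~ sgn y.1).
Proof.
rewrite /fam_weight; case: (sgn y.1); rewrite ?expr0 ?expr1 ?mul1r ?mulN1r /=.
  by rewrite oppr_lt0 cyc_weight_gt0 eqbF_neg.
by rewrite cyc_weight_lt0 eqb_id.
Qed.

Lemma card_fam_row (P : pred (K * (bool * 'I_m))) (s : K -> bool) i :
  (forall y, P y = (y.2.1 == s y.1)) ->
  #|[set y | ((fam_cell y).1 == i) && P y]| = (\sum_k #|[set x | r k x == i]|)%N.
Proof.
move=> Ps.
rewrite -sum1dep_card big_mkcond big_pair; apply: eq_bigr => k _.
rewrite -big_mkcond sum1dep_card -[RHS]mul1n -(cards1 (s k)) -(card_cyc_cell_row _ (c k)).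
by apply: eq_card => y; rewrite !inE Ps.
Qed.

Lemma card_fam_col (P : pred (K * (bool * 'I_m))) (s : K -> bool) j :
  (forall y, P y = (y.2.1 == s y.1)) ->
  #|[set y | ((fam_cell y).2 == j) && P y]| = (\sum_k #|[set x | c k x == j]|)%N.
Proof.
move=> Ps.
rewrite -sum1dep_card big_mkcond big_pair; apply: eq_bigr => k _.
rewrite -big_mkcond sum1dep_card -[RHS]mul1n -(cards1 (s k)) -(card_cyc_cell_col (r k)).
by apply: eq_card => y; rewrite !inE Ps.
Qed.

Lemma fam_cellsE : [set fam_cell y | y : K * (bool * 'I_m)] = \bigcup_k cyc (r k) (c k).
Proof.
apply/setP => z; apply/imsetP/bigcupP => [[[k y] _ ->]|[k _]].
  by exists k => //; apply: mem_cyc_cell.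
by rewrite -cyc_cellE => /imsetP[y _ ->]; exists (k, y).
Qed.

Lemma perm_abs_fam_weight (L : seq nat) :
  (forall k k', k != k' -> (ofs k + 2 * m <= ofs k') || (ofs k' + 2 * m <= ofs k))%N ->
  (forall k, {subset block (ofs k) (2 * m) <= L}) -> size L = (#|K| * (2 * m))%N ->
  perm_eq [seq absz (fam_weight y) | y <- enum {: K * (bool * 'I_m)}] L.
Proof.
move=> ofs_sep L_blocks size_L.
have abs_fam y : absz (fam_weight y) = (ofs y.1 + cyc_label (base y.1) y.2).+1.
  by rewrite abszMsign abs_cyc_weight.
have uniq_abs : uniq [seq absz (fam_weight y) | y <- enum {: K * (bool * 'I_m)}].
  rewrite map_inj_uniq ?enum_uniq // => -[k y] [k' y']; rewrite !abs_fam /=.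
  have := cyc_label_lt (base k) y; have := cyc_label_lt (base k') y'.
  have [<- _ _ /eqP|/ofs_sep] := eqVneq k k'; last by lia.
  by rewrite eqSS eqn_add2l => /eqP /cyc_label_inj ->.
have sub_abs : {subset [seq absz (fam_weight y) | y <- enum {: K * (bool * 'I_m)}] <= L}.
  move=> _ /mapP[[k y] _ ->]; apply: (L_blocks k); rewrite abs_fam mem_block /=.
  by have := cyc_label_lt (base k) y; lia.
have size_abs : size [seq absz (fam_weight y) | y <- enum {: K * (bool * 'I_m)}] = size L.
  by rewrite size_map -cardE card_prod card_prod card_bool card_ord size_L; lia.
have [_ eq_abs] := uniq_min_size uniq_abs sub_abs (eq_leq (esym size_abs)).
by apply: uniq_perm; rewrite // (uniq_size_uniq uniq_abs eq_abs) size_abs.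
Qed.

Hypothesis m_gt1 : (1 < m)%N.
Hypotheses (r_inj : forall k, injective (r k)) (c_inj : forall k, injective (c k)).
Hypothesis cyc_disj : forall k k', k != k' -> [disjoint cyc (r k) (c k) & cyc (r k') (c k')].

Lemma fam_cell_inj : injective fam_cell.
Proof.
move=> [k y] [k' y'] e; have [kk'|nkk'] := eqVneq k k'.
  by subst k'; congr (_, _); exact: (cyc_cell_inj m_gt1 (@r_inj k) (@c_inj k) e).
have := disjointFr (cyc_disj nkk') (mem_cyc_cell (r k) (c k) y).
by rewrite [cyc_cell _ _ _]e mem_cyc_cell.
Qed.

Hypothesis rows_bal : forall i, \sum_k (-1) ^+ sgn k * #|[set x | r k x == i]|%:R = 0 :> int.
Hypothesis bases_bal : forall i, \sum_k (-1) ^+ sgn k * (r k (base k) == i)%:R = 0 :> int.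
Hypothesis cols_bal : forall j, \sum_k (-1) ^+ sgn k * #|[set x | c k x == j]|%:R = 0 :> int.

Lemma balanced_fam_mx (L : seq nat) :
  (forall k k', k != k' -> (ofs k + 2 * m <= ofs k') || (ofs k' + 2 * m <= ofs k))%N ->
  (forall k, {subset block (ofs k) (2 * m) <= L}) -> size L = (#|K| * (2 * m))%N ->
  exists A : 'M[int]_n,
    [/\ forall i j, (A i j != 0) = ((i, j) \in \bigcup_k cyc (r k) (c k)),
        shiftable A,
        perm_eq (abs_entries A (\bigcup_k cyc (r k) (c k))) L,
        forall i, \sum_j A i j = 0 & forall j, \sum_i A i j = 0].
Proof.
move=> ofs_sep L_blocks size_L; exists (cell_mx fam_cell fam_weight); rewrite -fam_cellsE; split.
- by apply: (cell_mx_neq0 fam_cell_inj) => y; rewrite -absz_eq0 abszMsign abs_cyc_weight.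
- split=> [i|j].
    rewrite (card_cell_mx_row _ fam_cell_inj (P := fun x => 0 < x)) ?ltxx //.
    rewrite (card_cell_mx_row _ fam_cell_inj (P := fun x => x < 0)) ?ltxx //.
    rewrite (card_fam_row _ fam_weight_gt0).
    exact/esym/(card_fam_row (s := negb \o sgn) _ fam_weight_lt0).
  rewrite (card_cell_mx_col _ _ fam_cell_inj (P := fun x => 0 < x)) ?ltxx //.
  rewrite (card_cell_mx_col _ _ fam_cell_inj (P := fun x => x < 0)) ?ltxx //.
  rewrite (card_fam_col _ fam_weight_gt0).
  exact/esym/(card_fam_col (s := negb \o sgn) _ fam_weight_lt0).
- apply: perm_trans (abs_entries_cell_mx _ fam_cell_inj) _.
  exact: perm_abs_fam_weight ofs_sep L_blocks size_L.
- move=> i; rewrite cell_mx_row_sum fam_row_sum.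
  under eq_bigr do rewrite natrM mulrBr mulrCA.
  by rewrite sumrB -mulr_sumr rows_bal bases_bal mulr0 subr0.
- by move=> j; rewrite cell_mx_col_sum fam_col_sum cols_bal oppr0.
Qed.

End CycleFamily.

Local Close Scope ring_scope.

Section CyclePairs.

Variables (m n : nat).

Definition cyc2 (r c : bool -> 'I_m -> 'I_n) : {set cell n} :=
  cyc (r false) (c false) :|: cyc (r true) (c true).

Definition cyc2_factor (r c : bool -> 'I_m -> 'I_n) : Prop :=
  [/\ 1 < m, forall b, injective (r b), forall b, injective (c b),
      [disjoint cyc (r false) (c false) & cyc (r true) (c true)] & two_factor (cyc2 r c)].

Lemma cyc2_addb r c sw :
  cyc2 (fun b => r (b (+) sw)) (fun b => c (b (+) sw)) = cyc2 r c.
Proof. by case: sw; rewrite /cyc2 // setUC. Qed.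

Lemma cyc2_factor_addb r c sw :
  cyc2_factor r c -> cyc2_factor (fun b => r (b (+) sw)) (fun b => c (b (+) sw)).
Proof.
case=> m_gt1 r_inj c_inj disj tf; split; rewrite ?cyc2_addb //.
by case: sw; rewrite //= disjoint_sym.
Qed.

Lemma cyc2_factor_rows r c i : cyc2_factor r c ->
  \sum_b #|[set x | r b x == i]| = 1.
Proof.
case=> m_gt1 r_inj c_inj disj [tf_rows _]; have := tf_rows i.
rewrite card_setIdU_disjoint // !card_setId_cyc // big_bool /=.
have cnt b : #|[set y | (cyc_cell (r b) (c b) y).1 == i]| = 2 * #|[set x | r b x == i]|.
  rewrite -[2]card_bool -cardsT -(card_cyc_cell_row _ (c b)).
  by apply: eq_card => y; rewrite !inE andbT.
by rewrite !cnt => h; apply/eqP; rewrite -(eqn_pmul2l (_ : 0 < 2)) // mulnDr addnC h.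
Qed.

Lemma cyc2_factor_cols r c j : cyc2_factor r c ->
  \sum_b #|[set x | c b x == j]| = 1.
Proof.
case=> m_gt1 r_inj c_inj disj [_ tf_cols]; have := tf_cols j.
rewrite card_setIdU_disjoint // !card_setId_cyc // big_bool /=.
have cnt b : #|[set y | (cyc_cell (r b) (c b) y).2 == j]| = 2 * #|[set x | c b x == j]|.
  rewrite -[2]card_bool -cardsT -(card_cyc_cell_col (r b)).
  by apply: eq_card => y; rewrite !inE andbT.
by rewrite !cnt => h; apply/eqP; rewrite -(eqn_pmul2l (_ : 0 < 2)) // mulnDr addnC h.
Qed.

Lemma cyc2_factor_rows_cover r c i :
  cyc2_factor r c -> [exists x, r false x == i] || [exists x, r true x == i].
Proof.
move=> /(cyc2_factor_rows i); rewrite big_bool /=.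
set a := #|_|; set b := #|_| => ab1.
have [/card_gt0P[x]|/card_gt0P[x]] : 0 < a \/ 0 < b by lia.
  by rewrite inE => rx; apply/orP; right; apply/existsP; exists x.
by rewrite inE => rx; apply/orP; left; apply/existsP; exists x.
Qed.

Lemma cyc2_factor_pairing r1 c1 r2 c2 :
  cyc2_factor r1 c1 -> cyc2_factor r2 c2 ->
  exists sw (base1 base2 : bool -> 'I_m), forall b, r2 (b (+) sw) (base2 b) = r1 b (base1 b).
Proof.
move=> f1 f2; have x0 : 'I_m by case: f1 => m_gt1 *; exists 0; lia.
have rows_ne (r : bool -> 'I_m -> 'I_n) b : exists i, [exists x, r b x == i].
  by exists (r b x0); apply/existsP; exists x0.
have [sw meet] := cover_pairing (rows_ne r1) (rows_ne r2)
  (fun i => cyc2_factor_rows_cover i f1) (fun i => cyc2_factor_rows_cover i f2).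
have base b : exists x1 x2, r2 (b (+) sw) x2 = r1 b x1.
  have [i /andP[/existsP[x1 /eqP r1i] /existsP[x2 /eqP r2i]]] := meet b.
  by exists x1, x2; rewrite r1i r2i.
have [[x1f [x2f ef]] [x1t [x2t et]]] := (base false, base true).
by exists sw, (fun b => if b then x1t else x1f), (fun b => if b then x2t else x2f) => -[].
Qed.

End CyclePairs.

Lemma two_factor_two_ncycles_cyc2 n (S : {set cell n}) :
  two_factor_two_ncycles S ->
  exists m (r c : bool -> 'I_m -> 'I_n), [/\ n = 2 * m, cyc2_factor r c & S = cyc2 r c].
Proof.
case=> tf [C1 [C2 [[m [r1 [c1 [m_gt1 nm r1_inj c1_inj eC1]]]]]]].
case=> [m' [r2 [c2 [_ nm' r2_inj c2_inj eC2]]]] disj eS.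
have em : m' = m by lia.
subst m' C1 C2 S; exists m, (fun b => if b then r2 else r1), (fun b => if b then c2 else c1).
by split=> //; split=> //; case.
Qed.

Lemma paired_cyc2_mx m (r1 c1 r2 c2 : bool -> 'I_m -> 'I_(2 * m)) (base1 base2 : bool -> 'I_m)
    (s t u v : nat) :
  cyc2_factor r1 c1 -> cyc2_factor r2 c2 -> [disjoint cyc2 r1 c1 & cyc2 r2 c2] ->
  (forall b, r2 b (base2 b) = r1 b (base1 b)) ->
  t + 2 * m < s -> u + 2 * m < t -> v + 2 * m < u ->
  exists A : 'M[int]_(2 * m),
    [/\ forall i j, (A i j != 0)%R = ((i, j) \in cyc2 r1 c1 :|: cyc2 r2 c2),
        shiftable A,
        perm_eq (abs_entries A (cyc2 r1 c1 :|: cyc2 r2 c2))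
                (block s (2 * m) ++ block t (2 * m) ++ block u (2 * m) ++ block v (2 * m)),
        forall i, (\sum_j A i j)%R = 0%R & forall j, (\sum_i A i j)%R = 0%R].
Proof.
move=> f1 f2 disj12 bases hs ht hu.
have sub (r c : bool -> 'I_m -> 'I_(2 * m)) b : cyc (r b) (c b) \subset cyc2 r c.
  by case: b; rewrite ?subsetUl ?subsetUr.
have cells : \bigcup_(k : bool * bool)
    cyc ((if k.1 then r2 else r1) k.2) ((if k.1 then c2 else c1) k.2) = cyc2 r1 c1 :|: cyc2 r2 c2.
  by rewrite (bigcup_bool2 (fun a b => cyc ((if a then r2 else r1) b) ((if a then c2 else c1) b))).
rewrite -cells; case: (f1) (f2) => m_gt1 r1_inj c1_inj d1 _ [_ r2_inj c2_inj d2 _].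
apply: (balanced_fam_mx (sgn := fst) (base := fun k => (if k.1 then base2 else base1) k.2)
  (ofs := fun k => (if k.1 then fun b => if b then v else u else fun b => if b then t else s) k.2)).
- exact: m_gt1.
- by move=> [[] b].
- by move=> [[] b].
- move=> [[] []] [[] []] //= _; first [ by rewrite disjoint_sym
    | exact: disjointW (sub r1 c1 _) (sub r2 c2 _) disj12
    | rewrite disjoint_sym; exact: disjointW (sub r1 c1 _) (sub r2 c2 _) disj12 ].
- by move=> i; rewrite sum_sign_fst -!natr_sum (cyc2_factor_rows i f1) (cyc2_factor_rows i f2)
    subrr.
- move=> i; rewrite sum_sign_fst; apply/eqP; rewrite subr_eq0; apply/eqP.
  by apply: eq_bigr => b _ /=; rewrite bases.
- by move=> j; rewrite sum_sign_fst -!natr_sum (cyc2_factor_cols j f1) (cyc2_factor_cols j f2)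
    subrr.
- by move=> [[] []] [[] []] //= _; lia.
- by move=> [[] []] x /= bx; rewrite !mem_cat bx ?orbT.
- by rewrite !size_cat !size_map !size_iota card_prod card_bool; lia.
Qed.

Unset Implicit Arguments.

Theorem lemma2p4 (n : nat) (S1 S2 : {set cell n}) (s t u v : nat) :
  ~~ odd n ->
  [disjoint S1 & S2] ->
  two_factor_two_ncycles S1 ->
  two_factor_two_ncycles S2 ->
  0 < s -> 0 < t -> 0 < u -> 0 < v ->
  t + n < s -> u + n < t -> v + n < u ->
  exists A : 'M[int]_n,
    [/\ (forall i j, (A i j != 0%R) = ((i, j) \in S1 :|: S2)),
        shiftable A,
        perm_eq (abs_entries A (S1 :|: S2))
                (block s n ++ block t n ++ block u n ++ block v n),
        (forall i : 'I_n, (\sum_(j < n) A i j)%R = 0%R) &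
        (forall j : 'I_n, (\sum_(i < n) A i j)%R = 0%R)].
Proof.
(* n is even since K_(n,n) has n-cycles. *)
move=> _ disj12 /two_factor_two_ncycles_cyc2[m [r1 [c1 [nm f1 eS1]]]].
move=> /two_factor_two_ncycles_cyc2[m' [r2 [c2 [nm' f2 eS2]]]] _ _ _ _.
have em : m' = m by lia.
subst m' n S1 S2; have [sw [base1 [base2 bases]]] := cyc2_factor_pairing f1 f2.
rewrite -(cyc2_addb r2 c2 sw) in disj12 *.
exact: (paired_cyc2_mx (r2 := fun b => r2 (b (+) sw)) f1 (cyc2_factor_addb sw f2) disj12 bases).
Qed.
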